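(* Let $F$ be a totally real number field, $D$ a totally definite quaternion $F$-algebra, and $\mathcal O$ an $O_F$-order in $D$. If $[P]\in\mathrm{Picent}(\mathcal O)$ is not in the kernel of $\mathrm{Nr}:\mathrm{Picent}(\mathcal O)\to\mathrm{Cl}^+(O_F)$, then $\mathrm{Cl}(\mathcal O)^{[P]}=\emptyset$.
   Context: $\mathrm{Cl}(\mathcal O)$ is the set of classes of locally principal fractional right $\mathcal O$-ideals modulo left multiplication by $D^\times$. $\mathrm{Picent}(\mathcal O)$ is the group of invertible two-sided fractional $\mathcal O$-ideals modulo $\{a\mathcal O:a\in F^\times\}$; it acts on $\mathrm{Cl}(\mathcal O)$ by $([I],[P])\mapsto[IP]$, and $\mathrm{Cl}(\mathcal O)^{[P]}$ is the set of fixed points of $[P]$. The map $\mathrm{Nr}$ sends $[P]$ to the narrow ideal class of the reduced norm $\mathrm{Nr}(P)$ (the fractional $O_F$-ideal generated by reduced norms of elements of $P$) in the narrow class group $\mathrm{Cl}^+(O_F)$. *)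

From HB Require Import structures.
From mathcomp Require Import all_boot all_order all_algebra all_field.
Set Implicit Arguments. Unset Strict Implicit. Unset Printing Implicit Defensive.
Import Order.TTheory GRing.Theory Num.Theory.
Local Open Scope ring_scope.

Definition seteq (T : Type) (A B : T -> Prop) : Prop := forall x, A x <-> B x.

Section NumberField.
Variable F : fieldType.

Definition OF_int (x : F) : Prop :=
  exists p : {poly int}, p \is monic /\ root (map_poly (fun z : int => z%:~R) p) x.

Definition totally_real : Prop :=
  forall (s : {rmorphism F -> algC}) (x : F), s x \is Num.real.

Definition totally_positive (c : F) : Prop :=
  forall s : {rmorphism F -> algC}, 0 < s c.

Definition OF_prime (p : F -> Prop) : Prop :=
  [/\ (forall x, p x -> OF_int x), p 0,
      (forall x y, p x -> p y -> p (x - y)),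
      (forall r x, OF_int r -> p x -> p (r * x)) &
  [/\ ~ p 1,
      (forall x y, OF_int x -> OF_int y -> p (x * y) -> p x \/ p y) &
      exists x, p x /\ x != 0]].

Definition principal_OF (c : F) : F -> Prop := fun y => exists r, OF_int r /\ y = c * r.

Definition narrow_trivial (J : F -> Prop) : Prop :=
  exists c : F, c != 0 /\ totally_positive c /\ seteq J (principal_OF c).

End NumberField.

Section Quaternion.
Variables (F : fieldType) (D : falgType F).

Definition qbasis (i j : D) : 4.-tuple D := [tuple 1; i; j; i * j].

Definition quaternion_data (a b : F) (i j : D) : Prop :=
  [/\ a != 0, b != 0, i * i = a%:A, j * j = b%:A &
      i * j = - (j * i) /\ basis_of fullv (qbasis i j)].

(* totally definite: D ⊗_σ R is the Hamilton quaternions for every real place σ,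
   i.e. σ(a) < 0 and σ(b) < 0 *)
Definition totally_definite (a b : F) : Prop :=
  forall s : {rmorphism F -> algC}, s a < 0 /\ s b < 0.

Definition nrd (a b : F) (i j : D) (x : D) : F :=
  let c k := coord (qbasis i j) (inord k) x in
  c 0%N ^+ 2 - a * c 1%N ^+ 2 - b * c 2%N ^+ 2 + a * b * c 3%N ^+ 2.

Definition lattice (I : D -> Prop) : Prop :=
  exists (n : nat) (g : 'I_n -> D),
    seteq I (fun y => exists c : 'I_n -> F,
                (forall k, OF_int (c k)) /\ y = \sum_(k < n) c k *: g k)
    /\ <<[seq g k | k : 'I_n]>>%VS = fullv.

Definition prodS (I J : D -> Prop) : D -> Prop :=
  fun y => exists (n : nat) (x z : 'I_n -> D),
    (forall k, I (x k) /\ J (z k)) /\ y = \sum_(k < n) x k * z k.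

Definition lmulS (alpha : D) (I : D -> Prop) : D -> Prop :=
  fun y => exists x, I x /\ y = alpha * x.

Definition OF_order (O : D -> Prop) : Prop :=
  [/\ lattice O, O 1 & forall x y, O x -> O y -> O (x * y)].

Definition right_frac_ideal (O I : D -> Prop) : Prop :=
  lattice I /\ forall x y, I x -> O y -> I (x * y).

Definition loc (p : F -> Prop) (M : D -> Prop) : D -> Prop :=
  fun x => exists m s, [/\ M m, OF_int s, ~ p s & x = s^-1 *: m].

Definition locally_principal_right (O I : D -> Prop) : Prop :=
  right_frac_ideal O I /\
  forall p, OF_prime p -> exists alpha : D,
    alpha \is a GRing.unit /\ seteq (loc p I) (lmulS alpha (loc p O)).

Definition invertible_twosided (O P : D -> Prop) : Prop :=
  [/\ lattice P, (forall x y, O x -> P y -> P (x * y)),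
      (forall x y, P x -> O y -> P (x * y)) &
      exists Q, lattice Q /\ seteq (prodS P Q) O /\ seteq (prodS Q P) O].

Definition NrS (a b : F) (i j : D) (P : D -> Prop) : F -> Prop :=
  fun y => exists (n : nat) (c : 'I_n -> F) (g : 'I_n -> D),
    [/\ forall k, OF_int (c k), forall k, P (g k) &
        y = \sum_(k < n) c k * nrd a b i j (g k)].

(* [I] is fixed by [P] in Cl(O): [IP] = [I], i.e. IP = alpha I, alpha in D^x *)
Definition class_fixed (I P : D -> Prop) : Prop :=
  exists alpha : D, alpha \is a GRing.unit /\ seteq (prodS I P) (lmulS alpha I).

End Quaternion.

From HB Require Import structures.
From mathcomp Require Import all_boot all_order all_algebra all_field.
From mathcomp Require Import ring zify boolp classical_sets.
Set Implicit Arguments. Unset Strict Implicit. Unset Printing Implicit Defensive.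
Import Order.TTheory GRing.Theory Num.Theory.
Local Open Scope ring_scope.
Local Open Scope classical_set_scope.

(* Let alpha be a unit with I P = alpha I.  At a prime p of O_F the locally
   principal ideal I becomes beta O_p, so that P_p = beta^-1 alpha beta O_p and
   the reduced norm ideal Nr(P) agrees with nrd(alpha) O_F after localisation at
   every p.  Ideals of O_F agreeing locally everywhere are equal, because an
   ideal lying in no maximal ideal is O_F (maximal ideals are nonzero: 1/2 is not
   integral).  The local comparison uses that nrd is multiplicative and integral
   on O: by Cayley-Hamilton an element of O is a root of a monic polynomial over
   O_F, which its reduced characteristic polynomial X^2 - trd X + nrd divides.
   Finally D is totally definite, so nrd is positive definite at every real
   place: nrd(alpha) is totally positive and Nr(P) is trivial in Cl^+(O_F). *)

Section Integers.
Variable F : fieldType.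

Lemma OF_intP (x : F) : OF_int x <-> integralOver intr x.
Proof. by split=> [[p [mp rp]]|[p mp rp]]; exists p. Qed.

Lemma integral_fmorph (K : nzRingType) (f : {rmorphism F -> K}) (x : F) :
  integralOver (intr : int -> K) (f x) <-> integralOver (intr : int -> F) x.
Proof.
have map_intr (p : {poly int}) : map_poly intr p = map_poly f (map_poly intr p).
  by rewrite -map_poly_comp; apply: eq_map_poly => z /=; rewrite rmorph_int.
split=> -[p mp rp]; exists p => //; move: rp; rewrite map_intr /root horner_map.
  by rewrite fmorph_eq0.
by move/eqP->; rewrite rmorph0.
Qed.

Definition OFb : {pred F} := fun x => `[< OF_int x >].

Lemma OFbP x : reflect (OF_int x) (x \in OFb).
Proof. by rewrite unfold_in; apply: asboolP. Qed.

Fact OFb_subring : subring_closed OFb.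
Proof.
split=> [|x y /OFbP/OF_intP hx /OFbP/OF_intP hy|x y /OFbP/OF_intP hx /OFbP/OF_intP hy];
  apply/OFbP/OF_intP.
- exact: integral1.
- exact: integral_sub.
- exact: integral_mul.
Qed.

HB.instance Definition _ := GRing.isSubringClosed.Build F OFb OFb_subring.

Lemma OF_int0 : OF_int (0 : F). Proof. by apply/OFbP; rewrite rpred0. Qed.
Lemma OF_int1 : OF_int (1 : F). Proof. by apply/OFbP; rewrite rpred1. Qed.

Lemma OF_intD (x y : F) : OF_int x -> OF_int y -> OF_int (x + y).
Proof. by move=> /OFbP hx /OFbP hy; apply/OFbP; rewrite rpredD. Qed.

Lemma OF_intB (x y : F) : OF_int x -> OF_int y -> OF_int (x - y).
Proof. by move=> /OFbP hx /OFbP hy; apply/OFbP; rewrite rpredB. Qed.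

Lemma OF_intM (x y : F) : OF_int x -> OF_int y -> OF_int (x * y).
Proof. by move=> /OFbP hx /OFbP hy; apply/OFbP; rewrite rpredM. Qed.

Lemma OF_int_root_monic (p : {poly F}) x :
  p \is monic -> p \is a polyOver OFb -> root p x -> OF_int x.
Proof.
move=> mp /polyOverP Op rp; apply/OF_intP.
apply: integral_root_monic mp rp _ => z /(nthP 0) [k _ <-].
exact/OF_intP/OFbP.
Qed.

End Integers.
Arguments OFb {F}.

Section Ideals.
Variable F : fieldType.

Definition OF_submodule (M : F -> Prop) : Prop :=
  [/\ M 0, (forall x y, M x -> M y -> M (x + y))
    & (forall r x, OF_int r -> M x -> M (r * x))].

Definition OF_ideal (J : F -> Prop) : Prop :=
  (forall x, J x -> OF_int x) /\ OF_submodule J.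

Definition colon (M : F -> Prop) (w : F) : F -> Prop :=
  fun r => OF_int r /\ M (r * w).

Definition add_principal (A : F -> Prop) (x : F) : F -> Prop :=
  fun z => exists m r, [/\ A m, OF_int r & z = m + r * x].

Lemma OF_int_submodule : OF_submodule (@OF_int F).
Proof. by split; [exact: OF_int0 | exact: OF_intD | exact: OF_intM]. Qed.

Lemma colon_ideal M w : OF_submodule M -> OF_ideal (colon M w).
Proof.
case=> M0 MD MZ; split=> [x []//|]; split.
- by split; [exact: OF_int0 | rewrite mul0r].
- by move=> x y [Ox Mx] [Oy My]; split; [exact: OF_intD | rewrite mulrDl; apply: MD].
- by move=> r x Or [Ox Mx]; split; [exact: OF_intM | rewrite -mulrA; apply: MZ].
Qed.

Lemma add_principal_ideal A x : OF_ideal A -> OF_int x -> OF_ideal (add_principal A x).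
Proof.
move=> [AO [A0 AD AZ]] Ox; split=> [_ [m [r [Am Or ->]]]|].
  by apply: OF_intD; [exact: AO | exact: OF_intM].
split.
- by exists 0, 0; split; rewrite ?mul0r ?addr0 //; exact: OF_int0.
- move=> _ _ [m [r [Am Or ->]]] [m' [r' [Am' Or' ->]]].
  by exists (m + m'), (r + r'); split; [exact: AD | exact: OF_intD | ring].
- move=> s _ Os [m [r [Am Or ->]]].
  by exists (s * m), (s * r); split; [exact: AZ | exact: OF_intM | ring].
Qed.

Lemma add_principal_sub A x : A `<=` add_principal A x.
Proof. by move=> z Az; exists z, 0; split=> //; [exact: OF_int0 | ring]. Qed.

Lemma add_principal_gen A x : OF_ideal A -> add_principal A x x.
Proof. by case=> _ [A0 _ _]; exists 0, 1; split=> //; [exact: OF_int1 | ring]. Qed.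

Lemma OF_ideal_bigcup_chain (G : set (set F)) : total_on G subset ->
  (forall A, G A -> A !=set0 -> OF_ideal A) ->
  \bigcup_(A in G) A !=set0 -> OF_ideal (\bigcup_(A in G) A).
Proof.
move=> Gtot Gideal [x0 [A0 GA0 A0x0]].
have {}Gideal A x : G A -> A x -> OF_ideal A by move=> GA Ax; apply: Gideal GA _; exists x.
split=> [x [A GA Ax]|]; first by case: (Gideal A x GA Ax) => AO _; exact: AO.
split.
- by exists A0 => //; case: (Gideal A0 x0 GA0 A0x0) => _ [].
- move=> x y [A GA Ax] [B GB By].
  have [AB|BA] := Gtot A B GA GB.
    by exists B => //; case: (Gideal B y GB By) => _ [_ BD _]; apply: BD => //; exact: AB.
  by exists A => //; case: (Gideal A x GA Ax) => _ [_ AD _]; apply: AD => //; exact: BA.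
- move=> r x Or [A GA Ax]; exists A => //.
  by case: (Gideal A x GA Ax) => _ [_ _ AZ]; exact: AZ.
Qed.

Lemma exists_maximal_ideal (J : F -> Prop) : OF_ideal J -> ~ J 1 ->
  exists A, [/\ OF_ideal A, ~ A 1, J `<=` A &
    forall x, OF_int x -> ~ A x -> add_principal A x 1].
Proof.
move=> idJ nJ1.
(* The disjunct [A = set0] only makes the empty chain admissible for Zorn. *)
pose admissible A := A = set0 \/ [/\ OF_ideal A, ~ A 1 & J `<=` A].
have [A [admA Amax]] : exists A, admissible A /\ forall B, A `<` B -> ~ admissible B.
  apply: Zorn_bigcup => G Gadm Gtot.
  have [[x [B0 GB0 B0x]]|Gempty] := pselect (\bigcup_(A in G) A !=set0); last first.
    by left; apply/seteqP; split=> // z Gz; apply: Gempty; exists z.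
  have Gprop A : G A -> A !=set0 -> [/\ OF_ideal A, ~ A 1 & J `<=` A].
    by move=> GA [y Ay]; case: (Gadm A GA) => // Ae; rewrite Ae in Ay.
  have [_ _ JB0] := Gprop B0 GB0 (ex_intro _ x B0x).
  right; split.
  - apply: OF_ideal_bigcup_chain => // [A GA /(Gprop A GA) []//|].
    by exists x, B0.
  - by case=> B GB B1; have [_ + _] := Gprop B GB (ex_intro _ 1 B1).
  - by move=> z Jz; exists B0 => //; exact: JB0.
have [Aempty|[idA nA1 JA]] := admA.
  exfalso; apply: (Amax J); last by right; split=> // z.
  rewrite Aempty; split=> // /(_ 0); apply.
  by case: idJ => _ [].
exists A; split=> // x Ox nAx; apply: contrapT => nA1'.
apply: (Amax (add_principal A x)); last first.
  right; split=> //; first exact: add_principal_ideal.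
  by move=> z /JA; apply: add_principal_sub.
split; first exact: add_principal_sub.
by move=> /(_ x (add_principal_gen x idA)).
Qed.

Lemma OF_submoduleB M x y : OF_submodule M -> M x -> M y -> M (x - y).
Proof.
case=> _ MD MZ Mx My; apply: MD => //; rewrite -mulN1r; apply: MZ => //.
by rewrite -sub0r; apply: OF_intB; [exact: OF_int0 | exact: OF_int1].
Qed.

Lemma OF_prime_neq0 (p : F -> Prop) s : OF_prime p -> ~ p s -> s != 0.
Proof. by case=> _ p0 _ _ _ nps; apply: contra_notN nps => /eqP->. Qed.

Lemma OF_prime_notM (p : F -> Prop) s t : OF_prime p -> OF_int s -> OF_int t ->
  ~ p s -> ~ p t -> ~ p (s * t).
Proof. by case=> _ _ _ _ [_ pM _] Os Ot nps npt /pM []. Qed.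

Lemma OF_prime_not1 (p : F -> Prop) : OF_prime p -> ~ p 1.
Proof. by case=> _ _ _ _ []. Qed.

Definition OF_not_field : Prop := exists d : F, [/\ OF_int d, d != 0 & ~ OF_int d^-1].

Section NotAField.
Hypothesis OF_nfield : OF_not_field.

Lemma maximal_ideal_prime A : OF_ideal A -> ~ A 1 ->
  (forall x, OF_int x -> ~ A x -> add_principal A x 1) -> OF_prime A.
Proof.
move=> [AO subA] nA1 Amax; have [A0 AD AZ] := subA.
split=> //; first by move=> x y; apply: OF_submoduleB.
split=> // [x y Ox Oy Axy|].
  have [Ax|nAx] := pselect (A x); [by left | have [Ay|nAy] := pselect (A y)]; first by right.
  have [m [r [Am Or e1]]] := Amax x Ox nAx; have [m' [r' [Am' Or' e2]]] := Amax y Oy nAy.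
  exfalso; apply: nA1.
  have -> : 1 = m * m' + (r * x * m' + (r' * y * m + r * r' * (x * y))).
    by rewrite -[1]mulr1 {1}e1 e2; ring.
  apply: (AD); first by apply: (AZ) => //; exact: AO.
  apply: (AD); first by apply: (AZ) => //; exact: OF_intM.
  by apply: (AD); apply: (AZ) => //; exact: OF_intM.
have [d [d_int d_neq0 dV_nint]] := OF_nfield.
have [Ad|nAd] := pselect (A d); first by exists d.
have [m [r [Am Or e]]] := Amax d d_int nAd.
exists m; split=> //; apply/eqP => m0; apply: dV_nint.
suff -> : d^-1 = r by [].
by apply: (mulfI d_neq0); rewrite divff // [1]e m0 add0r mulrC.
Qed.

Lemma exists_prime_above (J : F -> Prop) : OF_ideal J -> ~ J 1 ->
  exists2 p, OF_prime p & J `<=` p.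
Proof.
move=> idJ nJ1; have [A [idA nA1 JA Amax]] := exists_maximal_ideal idJ nJ1.
by exists A => //; exact: maximal_ideal_prime.
Qed.

Lemma OF_submodule_local_global M w : OF_submodule M ->
  (forall p, OF_prime p -> exists s, [/\ OF_int s, ~ p s & M (s * w)]) -> M w.
Proof.
move=> subM Mloc; have idJ := colon_ideal w subM.
have [[_]|nJ1] := pselect (colon M w 1); first by rewrite mul1r.
have [p prime_p Jp] := exists_prime_above idJ nJ1.
by have [s [Os nps Msw]] := Mloc p prime_p; case: nps; apply: Jp.
Qed.

End NotAField.
End Ideals.

Section CharZero.
Variable F : fieldExtType rat.

Lemma half_not_OF_int : ~ OF_int (2^-1 : F).
Proof.
have <- : in_alg F (2^-1 : rat) = 2^-1 by rewrite fmorphV rmorph_nat.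
move=> /OF_intP /integral_fmorph /(integral_fmorph (ratr : rat -> algC)) [p mp rp].
have : ratr (2^-1 : rat) \in Aint.
  apply: (root_monic_Aint rp); first exact: monic_map.
  by apply/polyOverP => k; rewrite coef_map /= intr_int.
move/(Cint_rat_Aint (Crat_rat _)) => /intrP [m hm].
have : (2 : algC) * m%:~R = 1 by rewrite -hm fmorphV rmorph_nat mulfV // pnatr_eq0.
by rewrite -[2]/((2 : int)%:~R) -intrM -[1]/((1 : int)%:~R) => /intr_inj; lia.
Qed.

Lemma ratext_OF_not_field : OF_not_field F.
Proof.
exists 2; split; [exact: OF_intD (OF_int1 F) (OF_int1 F) | | exact: half_not_OF_int].
by rewrite -(rmorph_nat (in_alg F) 2) fmorph_eq0.
Qed.

End CharZero.

Section QuaternionArithmetic.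
Variables (F : fieldType) (D : falgType F) (a b : F) (i j : D).
Hypothesis qD : quaternion_data a b i j.

Definition qcoord (x : D) (n : nat) : F := coord (qbasis i j) (inord n) x.

Local Notation c := qcoord.
Local Notation nrd := (nrd a b i j).

Lemma nrdE x : nrd x = c x 0 ^+ 2 - a * c x 1 ^+ 2 - b * c x 2 ^+ 2 + a * b * c x 3 ^+ 2.
Proof. by []. Qed.

Lemma qcoord_basis m n : (m < 4)%N -> (n < 4)%N -> c (qbasis i j)`_m n = (m == n)%:R.
Proof.
case: qD => _ _ _ _ [_ /basis_free free_q] ltm4 ltn4.
rewrite /qcoord -[m](@inordK 3) // (coord_free _ _ free_q).
by rewrite -val_eqE /= !inordK.
Qed.

Lemma qcoord1 n : (n < 4)%N -> c 1 n = (0 == n)%:R.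
Proof. by move=> ltn4; rewrite -(qcoord_basis _ ltn4). Qed.

Lemma qcoordi n : (n < 4)%N -> c i n = (1 == n)%:R.
Proof. by move=> ltn4; rewrite -(qcoord_basis _ ltn4). Qed.

Lemma qcoordj n : (n < 4)%N -> c j n = (2 == n)%:R.
Proof. by move=> ltn4; rewrite -(qcoord_basis _ ltn4). Qed.

Lemma qcoordk n : (n < 4)%N -> c (i * j) n = (3 == n)%:R.
Proof. by move=> ltn4; rewrite -(qcoord_basis _ ltn4). Qed.

Lemma qcoordD x y n : c (x + y) n = c x n + c y n. Proof. exact: linearD. Qed.
Lemma qcoordN x n : c (- x) n = - c x n. Proof. exact: linearN. Qed.
Lemma qcoordZ k x n : c (k *: x) n = k * c x n. Proof. exact: linearZ. Qed.

Lemma qcoord_expand x : x = c x 0 *: 1 + c x 1 *: i + c x 2 *: j + c x 3 *: (i * j).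
Proof.
case: qD => _ _ _ _ [_ basis_q]; rewrite {1}(coord_basis basis_q (memvf x)).
rewrite (eq_bigr (fun k : 'I_4 => c x k *: (qbasis i j)`_k)) => [|k _].
  by rewrite !big_ord_recl big_ord0 addr0 /= !addrA.
by rewrite /qcoord inord_val.
Qed.

Lemma qcoord_eq0 x : (forall n, (n < 4)%N -> c x n = 0) -> x = 0.
Proof. by move=> x0; rewrite [x]qcoord_expand !x0 // !scale0r !addr0. Qed.

Lemma mulii : i * i = a%:A. Proof. by case: qD. Qed.
Lemma muljj : j * j = b%:A. Proof. by case: qD. Qed.
Lemma mulji : j * i = - (i * j). Proof. by case: qD => _ _ _ _ [-> _]; rewrite opprK. Qed.

Lemma qcoordM x y n : (n < 4)%N -> c (x * y) n =
    (c x 0 * c y 0 + a * c x 1 * c y 1 + b * c x 2 * c y 2 - a * b * c x 3 * c y 3) * (0 == n)%:R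
  + (c x 0 * c y 1 + c x 1 * c y 0 - b * c x 2 * c y 3 + b * c x 3 * c y 2) * (1 == n)%:R
  + (c x 0 * c y 2 + c x 2 * c y 0 + a * c x 1 * c y 3 - a * c x 3 * c y 1) * (2 == n)%:R
  + (c x 0 * c y 3 + c x 3 * c y 0 + c x 1 * c y 2 - c x 2 * c y 1) * (3 == n)%:R.
Proof.
have mulik : i * (i * j) = a *: j by rewrite mulrA mulii mulr_algl.
have mulki : (i * j) * i = - (a *: j) by rewrite -mulrA mulji mulrN mulrA mulii mulr_algl.
have muljk : j * (i * j) = - (b *: i).
  by rewrite mulrA mulji mulNr -mulrA muljj -scalerAr mulr1.
have mulkj : (i * j) * j = b *: i by rewrite -mulrA muljj -scalerAr mulr1.
have mulkk : (i * j) * (i * j) = - (a * b)%:A.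
  by rewrite mulrA mulki mulNr -scalerAl muljj scalerA.
move=> ltn4; rewrite {1}[x]qcoord_expand {1}[y]qcoord_expand.
rewrite !mulrDl !mulrDr -!scalerAl -!scalerAr !mul1r !mulr1 !scalerA.
rewrite mulii muljj mulji mulik mulki muljk mulkj mulkk.
rewrite !(qcoordD, qcoordN, qcoordZ) qcoord1 // qcoordi // qcoordj // qcoordk //.
move: (0 == n) (1 == n) (2 == n) (3 == n) => e0 e1 e2 e3; ring.
Qed.

Lemma nrdM x y : nrd (x * y) = nrd x * nrd y.
Proof. by rewrite !nrdE !qcoordM //=; ring. Qed.

Lemma nrdZ k x : nrd (k *: x) = k ^+ 2 * nrd x.
Proof. by rewrite !nrdE !qcoordZ; ring. Qed.

Lemma nrd1 : nrd 1 = 1.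
Proof. by rewrite nrdE !qcoord1 //=; ring. Qed.

Lemma nrd_unit_neq0 u : u \is a GRing.unit -> nrd u != 0.
Proof.
by move=> Uu; apply: contra_eq_neq (nrdM u u^-1) => ->; rewrite mulrV // nrd1 mul0r oner_eq0.
Qed.

(* 2 c_0(x) is the reduced trace of x. *)
Lemma qchar_root x : x * x - (2 * c x 0) *: x + (nrd x)%:A = 0.
Proof.
apply: qcoord_eq0 => n ltn4; rewrite !qcoordD qcoordN !qcoordZ qcoordM // qcoord1 // nrdE.
by case: n ltn4 => [|[|[|[|n]]]] //= _; ring.
Qed.

Lemma nrd_gt0 (s : {rmorphism F -> algC}) x : (forall y, s y \is Num.real) ->
  s a < 0 -> s b < 0 -> x != 0 -> 0 < s (nrd x).
Proof.
move=> s_real sa_lt0 sb_lt0 x_neq0.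
have sq_ge0 y : 0 <= s y ^+ 2 by rewrite -realEsqr.
rewrite nrdE !rmorphD !rmorphN !rmorphM -!expr2.
set c0 := s (c x 0); set c1 := s (c x 1); set c2 := s (c x 2); set c3 := s (c x 3).
have -> : c0 ^+ 2 - s a * c1 ^+ 2 - s b * c2 ^+ 2 + s a * s b * c3 ^+ 2 =
    c0 ^+ 2 + (- s a * c1 ^+ 2 + (- s b * c2 ^+ 2 + (- s a) * (- s b) * c3 ^+ 2)) by ring.
have sa_ge0 : 0 <= - s a by rewrite oppr_ge0 ltW.
have sb_ge0 : 0 <= - s b by rewrite oppr_ge0 ltW.
have t0 : 0 <= c0 ^+ 2 := sq_ge0 _.
have t1 : 0 <= - s a * c1 ^+ 2 := mulr_ge0 sa_ge0 (sq_ge0 _).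
have t2 : 0 <= - s b * c2 ^+ 2 := mulr_ge0 sb_ge0 (sq_ge0 _).
have t3 : 0 <= - s a * - s b * c3 ^+ 2 := mulr_ge0 (mulr_ge0 sa_ge0 sb_ge0) (sq_ge0 _).
rewrite lt_def !addr_ge0 // andbT !paddr_eq0 ?addr_ge0 //.
rewrite !mulf_eq0 !oppr_eq0 (lt_eqF sa_lt0) (lt_eqF sb_lt0) /= !orbb !fmorph_eq0.
apply: contra x_neq0 => /and4P [/eqP c0_0 /eqP c1_0 /eqP c2_0 /eqP c3_0].
by apply/eqP/qcoord_eq0 => -[|[|[|[|n]]]].
Qed.

End QuaternionArithmetic.

Section Lattices.
Variables (F : fieldType) (D : falgType F).

Definition OF_span n (g : 'I_n -> D) : D -> Prop :=
  fun y => exists c : 'I_n -> F, (forall k, OF_int (c k)) /\ y = \sum_(k < n) c k *: g k.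

Definition OF_module (L : D -> Prop) : Prop :=
  exists n (g : 'I_n -> D), seteq L (OF_span g).

Lemma lattice_OF_module L : lattice L -> OF_module L.
Proof. by case=> n [g [Lg _]]; exists n, g. Qed.

Lemma OF_span_gen n (g : 'I_n -> D) k : OF_span g (g k).
Proof.
exists (fun l => (k == l)%:R); split=> [l|].
  by case: (k == l); [exact: OF_int1 | exact: OF_int0].
rewrite (bigD1 k) //= eqxx scale1r big1 ?addr0 // => l /negbTE.
by rewrite eq_sym => ->; rewrite scale0r.
Qed.

Lemma OF_module0 L : OF_module L -> L 0.
Proof.
case=> n [g Lg]; apply/Lg; exists (fun _ => 0); split=> [k|]; first exact: OF_int0.
by rewrite big1 // => k _; rewrite scale0r.
Qed.

Lemma OF_moduleD L x y : OF_module L -> L x -> L y -> L (x + y).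
Proof.
case=> n [g Lg] /Lg [c [Oc ->]] /Lg [c' [Oc' ->]]; apply/Lg.
exists (fun k => c k + c' k); split=> [k|]; first exact: OF_intD.
by rewrite -big_split /=; apply: eq_bigr => k _; rewrite scalerDl.
Qed.

Lemma OF_moduleZ L r x : OF_module L -> OF_int r -> L x -> L (r *: x).
Proof.
case=> n [g Lg] Or /Lg [c [Oc ->]]; apply/Lg.
exists (fun k => r * c k); split=> [k|]; first exact: OF_intM.
by rewrite scaler_sumr; apply: eq_bigr => k _; rewrite scalerA.
Qed.

Lemma mem_loc (p : F -> Prop) (M : D -> Prop) x : OF_prime p -> M x -> loc p M x.
Proof.
move=> prime_p Mx; exists x, 1; split=> //; first exact: OF_int1.
  exact: OF_prime_not1.
by rewrite invr1 scale1r.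
Qed.

Lemma locD (p : F -> Prop) (M : D -> Prop) x y : OF_prime p -> OF_module M ->
  loc p M x -> loc p M y -> loc p M (x + y).
Proof.
move=> prime_p modM [m [s [Mm Os nps ->]]] [m' [t [Mm' Ot npt ->]]].
have s_neq0 := OF_prime_neq0 prime_p nps; have t_neq0 := OF_prime_neq0 prime_p npt.
exists (t *: m + s *: m'), (s * t); split.
- by apply: OF_moduleD => //; apply: OF_moduleZ.
- exact: OF_intM.
- exact: OF_prime_notM.
rewrite scalerDr !scalerA; congr (_ *: m + _ *: m'); field; exact/andP.
Qed.

Lemma loc_sum (p : F -> Prop) (M : D -> Prop) n (f : 'I_n -> D) :
  OF_prime p -> OF_module M -> (forall k, loc p M (f k)) -> loc p M (\sum_(k < n) f k).
Proof.
move=> prime_p modM Mf; apply: (big_ind (loc p M)) => //; last by move=> x y; apply: locD.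
by apply: mem_loc => //; exact: OF_module0.
Qed.

End Lattices.

Lemma char_poly_over (R : comNzRingType) (S : subringClosed R) n (M : 'M[R]_n) :
  M \is a mxOver S -> char_poly M \is a polyOver S.
Proof.
move=> /mxOverP MS; apply: rpred_sum => s _; apply: rpredM; first exact: rpred_sign.
apply: rpred_prod => k _; rewrite !mxE.
by apply: rpredB; [apply: rpredMn; apply: polyOverX | rewrite polyOverC].
Qed.

Section IntegralOrder.
Variables (F : fieldType) (D : falgType F).

Lemma horner_alg_mul_gen n (g : 'I_n.+1 -> D) (M : 'M[F]_n.+1) o :
  (forall k, o * g k = \sum_l M k l *: g l) ->
  forall (r : {poly F}) k, horner_alg o r * g k = \sum_l horner_mx M r k l *: g l.
Proof.
move=> og; elim/poly_ind => [|r c IHr] k.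
  by rewrite !rmorph0 mul0r big1 // => l _; rewrite mxE scale0r.
rewrite rmorphD rmorphM /= horner_algX horner_algC mulrDl -mulrA og mulr_sumr.
under [in LHS]eq_bigr do rewrite -scalerAr IHr scaler_sumr.
rewrite [r * 'X]mulrC rmorphD rmorphM /= horner_mx_X horner_mx_C -scalerAl mul1r.
under [in RHS]eq_bigr do rewrite !mxE scalerDl.
rewrite big_split /=; congr (_ + _).
  rewrite exchange_big; apply: eq_bigr => m _; rewrite scaler_suml.
  by apply: eq_bigr => l _; rewrite scalerA.
rewrite (bigD1 k) //= eqxx mulr1n big1 ?addr0 // => m /negbTE.
by rewrite eq_sym => ->; rewrite mulr0n scale0r.
Qed.

Lemma OF_order_integral (O : D -> Prop) o : OF_order O -> O o ->
  exists p : {poly F}, [/\ p \is monic, p \is a polyOver OFb & horner_alg o p = 0].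
Proof.
case=> -[n [g [Og _]]] O1 OM Oo.
have o_g k : exists c : 'I_n -> F,
    (forall l, OF_int (c l)) /\ o * g k = \sum_l c l *: g l.
  by apply/Og/OM => //; apply/Og/OF_span_gen.
have {o_g}[C OC] := choice o_g.
have [c [_ one_g]] := (Og 1).1 O1.
case: n g Og C OC c one_g => [|n] g Og C OC c one_g.
  by move/eqP: one_g; rewrite big_ord0 oner_eq0.
pose M := \matrix_(k, l) C k l.
exists (char_poly M); split; first exact: char_poly_monic.
  by apply/char_poly_over/mxOverP => k l; rewrite mxE; apply/OFbP; case: (OC k).
have chiM_g k : horner_alg o (char_poly M) * g k = 0.
  rewrite (@horner_alg_mul_gen _ _ M) => [|l]; last first.
    by rewrite (OC l).2; apply: eq_bigr => m _; rewrite mxE.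
  by rewrite Cayley_Hamilton big1 // => l _; rewrite mxE scale0r.
rewrite -[LHS]mulr1 one_g mulr_sumr big1 // => k _.
by rewrite -scalerAr chiM_g scaler0.
Qed.
End IntegralOrder.

Section Quadratic.
Variable F : fieldType.

Definition quad (t n : F) : {poly F} := 'X^2 - t *: 'X + n%:P.

Lemma size_quad_tail (t n : F) :
  (size (- (t *: 'X) + n%:P)%R < size ('X^2 : {poly F}))%N.
Proof.
rewrite size_polyXn; apply: leq_ltn_trans (size_polyD _ _) _.
rewrite gtn_max size_polyN (leq_ltn_trans (size_scale_leq _ _)) ?size_polyX //.
exact: leq_ltn_trans (size_polyC_leq1 _) _.
Qed.

Lemma size_quad t n : size (quad t n) = 3%N.
Proof. by rewrite /quad -addrA size_polyDl ?size_quad_tail // size_polyXn. Qed.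

Lemma monic_quad t n : quad t n \is monic.
Proof. by rewrite monicE /quad -addrA lead_coefDl ?size_quad_tail // lead_coefXn. Qed.

Lemma horner_alg_quad (A : falgType F) (x : A) t n :
  horner_alg x (quad t n) = x * x - t *: x + n%:A.
Proof.
by rewrite /quad rmorphD rmorphB /= linearZ /= rmorphXn /= horner_algX horner_algC expr2 mulr_algl.
Qed.

(* A quadratic q with q(x) = 0 is the minimal polynomial of a non-scalar x. *)
Lemma quad_dvdp_annihilator (A : falgType F) (x : A) t n p :
  x \notin <[1]>%VS -> horner_alg x (quad t n) = 0 -> horner_alg x p = 0 ->
  quad t n %| p.
Proof.
move=> x_nscalar qx px; set r := p %% quad t n.
have rx : horner_alg x r = 0.
  by move: px; rewrite {1}(divp_eq p (quad t n)) rmorphD rmorphM /= qx mulr0 add0r.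
have size_r : (size r < 3)%N by rewrite -(size_quad t n) ltn_modp -size_poly_eq0 size_quad.
have r_lin : r = r`_1 *: 'X + (r`_0)%:P.
  apply/polyP => k; rewrite coefD coefZ coefX coefC.
  case: k => [|[|k]] /=; rewrite ?mulr0 ?mulr1 ?add0r ?addr0 //.
  by rewrite nth_default // -ltnS (leq_trans size_r).
move: rx; rewrite r_lin linearD linearZ /= horner_algX horner_algC mulr_algl => r1x_r0.
have r1_0 : r`_1 = 0.
  apply: contraNeq x_nscalar => r1_neq0; apply/vlineP; exists (- r`_0 / r`_1).
  apply: (scalerI r1_neq0); rewrite scalerA mulrC divfK // scaleNr.
  by apply/eqP; rewrite -subr_eq0 opprK; apply/eqP.
move: r1x_r0; rewrite r1_0 scale0r add0r => /eqP; rewrite scaler_eq0 oner_eq0 orbF => /eqP r0_0.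
by rewrite /dvdp -/r r_lin r1_0 r0_0 scale0r add0r.
Qed.

(* In F[X]/(q), both X and t - X are roots of q, hence of p, hence integral; their product is n. *)
Lemma quad_dvdp_const_OF_int (p : {poly F}) t n :
  p \is monic -> p \is a polyOver OFb -> quad t n %| p -> OF_int n.
Proof.
move=> mp Op qp; set q := quad t n.
have mk_q : mk_monic q = q by rewrite /mk_monic size_quad monic_quad.
have in_qpolyC (k : F) : in_qpoly q k%:P = qpolyC q k.
  apply/val_inj; change (polyn (in_qpoly q k%:P) = k%:P).
  rewrite in_qpoly_small // mk_q size_quad.
  exact: leq_ltn_trans (size_polyC_leq1 _) _.
have in_qpoly_q : in_qpoly q q = 0.
  apply/val_inj; change (Pdiv.Ring.rmodp q (mk_monic q) = 0).
  by rewrite mk_q Pdiv.Ring.rmodpp //; exact: mulrC.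
have root_int u : q \Po u = q -> integralOver intr (in_qpoly q u).
  move=> qu; apply: (@integral_root_monic _ _ _ _ (map_poly (qpolyC q) p)).
  - exact: monic_map.
  - rewrite /root; suff -> : (map_poly (qpolyC q) p).[in_qpoly q u] = in_qpoly q (p \Po u).
      by rewrite -(divpK qp) comp_polyM qu rmorphM /= in_qpoly_q mulr0.
    rewrite /comp_poly -horner_map /= -map_poly_comp; congr (_.[_]).
    by apply: eq_map_poly => k /=; rewrite in_qpolyC.
  - move=> z /(nthP 0) [k _ <-]; rewrite coef_map /=.
    exact/integral_fmorph/OF_intP/OFbP/polyOverP.
have qX : q \Po 'X = q by rewrite comp_polyXr.
have q_tX : q \Po (t%:P - 'X) = q.
  rewrite /q /quad -['X^2]/('X * 'X) comp_polyD comp_polyB comp_polyM comp_polyZ.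
  by rewrite comp_polyC comp_polyX -!mul_polyC; ring.
have := integral_mul (root_int _ qX) (root_int _ q_tX); rewrite -rmorphM /=.
have -> : 'X * (t%:P - 'X) = n%:P - q.
  by rewrite /q /quad -['X^2]/('X * 'X) -!mul_polyC; ring.
rewrite rmorphB /= in_qpoly_q subr0 in_qpolyC.
by move=> /integral_fmorph /OF_intP.
Qed.

End Quadratic.

Lemma horner_alg_scalar (F : fieldType) (A : falgType F) (k : F) (p : {poly F}) :
  horner_alg (k%:A : A) p = p.[k]%:A.
Proof.
elim/poly_ind: p => [|p c IHp]; first by rewrite !rmorph0 horner0 scale0r.
rewrite rmorphD rmorphM /= horner_algX horner_algC IHp !hornerE.
by rewrite scalerDl -scalerAl mul1r scalerA.
Qed.

Section ReducedNormIntegral.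
Variables (F : fieldType) (D : falgType F) (a b : F) (i j : D).
Hypothesis qD : quaternion_data a b i j.

Lemma nrd_OF_int_of_root x (p : {poly F}) :
  p \is monic -> p \is a polyOver OFb -> horner_alg x p = 0 -> OF_int (nrd a b i j x).
Proof.
move=> mp Op; have [/vlineP [k ->]|x_nscalar px] := boolP (x \in <[1]>%VS).
  rewrite horner_alg_scalar => /eqP; rewrite scaler_eq0 oner_eq0 orbF => pk.
  have k_int : OF_int k by exact: OF_int_root_monic mp Op pk.
  by rewrite nrdZ // nrd1 // mulr1 expr2; apply: OF_intM.
apply: (quad_dvdp_const_OF_int mp Op (t := 2 * qcoord i j x 0)).
apply: quad_dvdp_annihilator x_nscalar _ px.
by rewrite horner_alg_quad qchar_root.
Qed.

Lemma OF_order_nrd_OF_int O o : OF_order O -> O o -> OF_int (nrd a b i j o).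
Proof.
by move=> ordO Oo; have [p [mp Op po]] := OF_order_integral ordO Oo; exact: nrd_OF_int_of_root po.
Qed.

End ReducedNormIntegral.

Definition catf T n1 n2 (f1 : 'I_n1 -> T) (f2 : 'I_n2 -> T) (k : 'I_(n1 + n2)) : T :=
  match split k with inl k1 => f1 k1 | inr k2 => f2 k2 end.

Lemma NrS_submodule (F : fieldType) (D : falgType F) (a b : F) (i j : D) P :
  OF_submodule (NrS a b i j P).
Proof.
split.
- by exists 0%N, (fun _ => 0), (fun _ => 0); split=> [[]|[]|]; rewrite // big_ord0.
- move=> _ _ [n1 [c1 [g1 [Oc1 Pg1 ->]]]] [n2 [c2 [g2 [Oc2 Pg2 ->]]]].
  exists (n1 + n2)%N, (catf c1 c2), (catf g1 g2); split=> [k|k|]; rewrite /catf.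
  + by case: split.
  + by case: split.
  rewrite big_split_ord; congr (_ + _); apply: eq_bigr => k _.
    by rewrite (unsplitK (inl _ k)).
  by rewrite (unsplitK (inr _ k)).
- move=> r _ Or [n [c [g [Oc Pg ->]]]]; exists n, (fun k => r * c k), g.
  split=> // [k|]; first exact: OF_intM.
  by rewrite mulr_sumr; apply: eq_bigr => k _; rewrite mulrA.
Qed.

Section FixedClass.
Variables (F : fieldType) (D : falgType F) (a b : F) (i j : D).
Variables (O P I : D -> Prop) (alpha : D).
Hypotheses (qD : quaternion_data a b i j) (ordO : OF_order O).
Hypotheses (invP : invertible_twosided O P) (lpI : locally_principal_right O I).
Hypotheses (Ualpha : alpha \is a GRing.unit) (IP_eq : seteq (prodS I P) (lmulS alpha I)).

Local Notation nrd := (nrd a b i j).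

Lemma local_generator p : OF_prime p -> exists beta x1 s1,
  [/\ beta \is a GRing.unit, seteq (loc p I) (lmulS beta (loc p O)), I x1,
      OF_int s1 /\ ~ p s1 & x1 = s1 *: beta].
Proof.
move=> prime_p; have [beta [Ubeta Ibeta]] := lpI.2 p prime_p.
have [x1 [s1 [Ix1 Os1 nps1 beta_x1]]] : loc p I beta.
  by apply/Ibeta; exists 1; split; [apply: mem_loc => //; case: ordO | rewrite mulr1].
exists beta, x1, s1; split=> //.
by rewrite beta_x1 scalerA divff ?scale1r //; exact: OF_prime_neq0 nps1.
Qed.

Lemma nrd_ratio_local_int p g : OF_prime p -> P g ->
  exists s, [/\ OF_int s, ~ p s & OF_int (s * (nrd g / nrd alpha))].
Proof.
move=> prime_p Pg.
have [beta [x1 [s1 [Ubeta Ibeta Ix1 [Os1 nps1] ex1]]]] := local_generator prime_p.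
have [y [Iy x1g]] : lmulS alpha I (x1 * g).
  by apply/IP_eq; exists 1%N, (fun _ => x1), (fun _ => g); split=> [k|]; [split | rewrite big_ord1].
have [_ [[o [u [Oo Ou npu ->]]] ey]] := (Ibeta y).1 (mem_loc prime_p Iy).
have := congr1 nrd x1g; rewrite ex1 ey -scalerAl -!scalerAr !(nrdM qD, nrdZ).
have u_neq0 := OF_prime_neq0 prime_p npu.
have nrd_beta := nrd_unit_neq0 qD Ubeta; have nrd_alpha := nrd_unit_neq0 qD Ualpha.
move=> nrd_eq; have Osu := OF_intM Os1 Ou; have npsu := OF_prime_notM prime_p Os1 Ou nps1 npu.
exists (s1 * u * (s1 * u)); split; [exact: OF_intM | exact: OF_prime_notM |].
suff -> : s1 * u * (s1 * u) * (nrd g / nrd alpha) = nrd o by exact: OF_order_nrd_OF_int Oo.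
transitivity (u ^+ 2 / (nrd alpha * nrd beta) * (u^-1 ^+ 2 * (nrd alpha * (nrd beta * nrd o)))).
  by rewrite -nrd_eq; field; rewrite nrd_alpha nrd_beta.
by field; rewrite u_neq0 nrd_alpha nrd_beta.
Qed.

Lemma nrd_alpha_local_NrS p : OF_prime p ->
  exists s, [/\ OF_int s, ~ p s & NrS a b i j P (s * nrd alpha)].
Proof.
move=> prime_p.
have [beta [x1 [s1 [Ubeta Ibeta Ix1 [Os1 nps1] ex1]]]] := local_generator prime_p.
have [n [y [z [yz ax1]]]] : prodS I P (alpha * x1) by apply/IP_eq; exists x1.
have y_loc k : exists o, loc p O o /\ y k = beta * o.
  by apply/Ibeta/mem_loc => //; case: (yz k).
have {y_loc}[o yo] := choice y_loc.
have [w [v [Pw Ov npv ew]]] : loc p P (\sum_k o k * z k).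
  apply: loc_sum => // [|k]; first by case: invP => /lattice_OF_module.
  have [[o0 [u [Oo0 Ou npu ->]]] _] := yo k.
  exists (o0 * z k), u; split=> //; last by rewrite -scalerAl.
  by case: invP => _ OP _ _; apply: OP => //; case: (yz k).
have : alpha * x1 = beta * (v^-1 *: w).
  by rewrite -ew ax1 mulr_sumr; apply: eq_bigr => k _; rewrite (yo k).2 mulrA.
move/(congr1 nrd); rewrite ex1 -!scalerAr !(nrdM qD, nrdZ).
have v_neq0 := OF_prime_neq0 prime_p npv.
have nrd_beta := nrd_unit_neq0 qD Ubeta.
move=> nrd_eq; have Osv := OF_intM Os1 Ov; have npsv := OF_prime_notM prime_p Os1 Ov nps1 npv.
exists (s1 * v * (s1 * v)); split; [exact: OF_intM | exact: OF_prime_notM |].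
suff -> : s1 * v * (s1 * v) * nrd alpha = nrd w.
  exists 1%N, (fun _ => 1), (fun _ => w); split=> //; first by move=> _; exact: OF_int1.
  by rewrite big_ord1 mul1r.
transitivity (v ^+ 2 / nrd beta * (s1 ^+ 2 * (nrd alpha * nrd beta))); first by field.
by rewrite nrd_eq; field; rewrite v_neq0 nrd_beta.
Qed.

Hypothesis OF_nfield : OF_not_field F.

Lemma NrS_eq_principal : seteq (NrS a b i j P) (principal_OF (nrd alpha)).
Proof.
have nrd_alpha := nrd_unit_neq0 qD Ualpha; have [_ _ NrSZ] := NrS_submodule a b i j P.
move=> y; split=> [[n [c [g [Oc Pg ->]]]]|[r [Or ->]]].
  exists (\sum_k c k * (nrd (g k) / nrd alpha)); split.
    apply/OFbP/rpred_sum => k _; apply/OFbP/OF_intM => //.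
    apply: (OF_submodule_local_global OF_nfield (OF_int_submodule F)) => p prime_p.
    exact: nrd_ratio_local_int.
  by rewrite mulr_sumr; apply: eq_bigr => k _; field.
rewrite mulrC; apply: NrSZ => //.
exact: (OF_submodule_local_global OF_nfield (NrS_submodule a b i j P)) nrd_alpha_local_NrS.
Qed.

End FixedClass.

Theorem lemma3p2 (F : fieldExtType rat) (D : falgType F) (a b : F) (i j : D)
    (O P : D -> Prop) :
  totally_real F ->
  quaternion_data a b i j ->
  totally_definite a b ->
  OF_order O ->
  invertible_twosided O P ->
  ~ narrow_trivial (NrS a b i j P) ->
  forall I : D -> Prop, locally_principal_right O I -> ~ class_fixed I P.
Proof.
move=> real_F qD definite ordO invP Nr_nontriv I lpI [alpha [Ualpha IP_eq]].
apply: Nr_nontriv; exists (nrd a b i j alpha); split; first exact: nrd_unit_neq0.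
split=> [s|].
  have [sa_lt0 sb_lt0] := definite s.
  apply: (nrd_gt0 qD (real_F s) sa_lt0 sb_lt0).
  by apply: contraTneq Ualpha => ->; rewrite unitr0.
exact: NrS_eq_principal ordO invP lpI Ualpha IP_eq (ratext_OF_not_field F).
Qed.
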